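(* Let $i\ge 0$ be an integer and let $G$ be an $\alpha_i$-metric graph. Then $diam(C(G))\le 3i+2$, i.e., any two central vertices of $G$ are at distance at most $3i+2$ in $G$.
   Context: All graphs are finite, connected, unweighted, undirected, without loops or multiple edges; $d(u,v)$ is the shortest-path distance in $G$. The interval $I(u,v)=\{x: d(u,x)+d(x,v)=d(u,v)\}$. A graph is $\alpha_i$-metric if for all vertices $u,v,w,x$: whenever $v\in I(u,w)$, $w\in I(v,x)$ and $v,w$ are adjacent, then $d(u,x)\ge d(u,v)+d(v,x)-i$. The eccentricity is $e(v)=\max_{u}d(u,v)$, the radius $rad(G)=\min_v e(v)$, and the center $C(G)=\{v: e(v)=rad(G)\}$; $diam(C(G))=\max\{d(x,y): x,y\in C(G)\}$ with distances taken in $G$. *)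

From mathcomp Require Import all_boot all_order.
Set Implicit Arguments. Unset Strict Implicit. Unset Printing Implicit Defensive.

Section Graph.
Variables (T : finType) (e : rel T).

Fixpoint nball (n : nat) (u : T) : {set T} :=
  match n with
  | 0 => [set u]
  | n'.+1 => nball n' u :|: [set y | [exists x in nball n' u, e x y]]
  end.

(* shortest-path distance: least n with v in the ball of radius n around u
   (for a connected graph on T this is < #|T|, so the search range suffices) *)
Definition dist (u v : T) : nat := find (fun n => v \in nball n u) (iota 0 #|T|).

Definition simple_graph : Prop := symmetric e /\ irreflexive e.
Definition connected_graph : Prop := forall u v : T, connect e u v.

Definition in_interval (u v x : T) : bool := dist u x + dist x v == dist u v.

Definition alpha_metric (i : nat) : Prop :=
  forall u v w x : T,
    in_interval u w v -> in_interval v x w -> e v w ->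
    dist u v + dist v x <= dist u x + i.

Definition ecc (v : T) : nat := \max_(u : T) dist u v.
Definition is_central (v : T) : Prop := forall w : T, ecc v <= ecc w.

End Graph.

(* Let x, y be central vertices, r the radius, and suppose d(x,y) >= 3i+3.
   Take c and p on an (x,y)-geodesic at distances i+1 and 2i+2 from x, a
   vertex z with d(c,z) = r (it exists because ecc(c) >= r) and the neighbour q
   of c on a (c,z)-geodesic.  Applied to the edge cq, the alpha_i condition
   gives d(x,q) <= i+1 and d(p,q) <= i+1, so p lies on a (q,y)-geodesic.
   Since d(z,x), d(z,y) <= r, the same condition lets a lower bound d(z,.) >= s
   propagate along geodesics running away from x or y; this yields first
   d(z,p) = r and then d(z,q) >= r, contradicting d(z,q) = r - 1. *)

From mathcomp Require Import all_boot all_order zify.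
Set Implicit Arguments. Unset Strict Implicit. Unset Printing Implicit Defensive.

Section GraphMetric.
Variables (T : finType) (e : rel T).
Hypothesis esym : symmetric e.
Hypothesis eirr : irreflexive e.
Hypothesis econ : connected_graph e.

Local Notation d := (dist e).
Local Notation B := (nball e).

Lemma nballS n u v :
  (v \in B n.+1 u) = (v \in B n u) || [exists x in B n u, e x v].
Proof. by rewrite /= in_setU inE. Qed.

Lemma nball_mono n m u : n <= m -> {subset B n u <= B m u}.
Proof.
move=> /subnK <- v; elim: (m - n) => // k IH /IH.
by rewrite addSn nballS => ->.
Qed.

Lemma nball_edge n u v w : v \in B n u -> e v w -> w \in B n.+1 u.
Proof. by move=> hv hvw; rewrite nballS; apply/orP; right; apply/existsP; exists v; rewrite hv. Qed.

Lemma nball_cat a b u v w : v \in B a u -> w \in B b v -> w \in B (a + b) u.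
Proof.
move=> hv; elim: b w => [|b IH] w; first by rewrite /= addn0 inE => /eqP ->.
rewrite nballS addnS => /orP [/IH /(nball_mono (leqnSn _)) //|].
by case/existsP=> x /andP [/IH hx exw]; exact: nball_edge exw.
Qed.

Lemma nball1 u v : e u v -> v \in B 1 u.
Proof. by apply: (@nball_edge 0); rewrite /= inE. Qed.

Lemma nball_sym n u v : v \in B n u -> u \in B n v.
Proof.
elim: n v => [|n IH] v; first by rewrite /= !inE => /eqP ->.
rewrite nballS => /orP [/IH /(nball_mono (leqnSn _)) //|].
case/existsP=> x /andP [/IH hx exv].
by rewrite -add1n; apply: nball_cat hx; apply: nball1; rewrite esym.
Qed.

Lemma last_path_nball u p : path e u p -> last u p \in B (size p) u.
Proof.
elim: p u => [|a p IH] u; first by rewrite /= inE.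
by case/andP=> eua /IH hp; have := nball_cat (nball1 eua) hp; rewrite add1n.
Qed.

Lemma exists_nball_lt_card u v : exists2 n, n < #|T| & v \in B n u.
Proof.
have /connectP [p hp ->] := econ u v.
have [p' hp' uniq_p' _] := shortenP hp.
exists (size p'); last exact: last_path_nball.
by have := max_card (mem (u :: p')); rewrite (card_uniqP uniq_p').
Qed.

Lemma mem_nball_dist n u v : (v \in B n u) = (d u v <= n).
Proof.
rewrite /dist; set P := fun n => v \in B n u.
have hasP_ : has P (iota 0 #|T|).
  have [m hm hv] := exists_nball_lt_card u v.
  by apply/hasP; exists m; rewrite ?mem_iota.
have find_lt : find P (iota 0 #|T|) < #|T|.
  by rewrite -[X in _ < X](size_iota 0) -has_find.
apply/idP/idP => [hv|].
  rewrite leqNgt; apply/negP => hlt.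
  by have := before_find 0 hlt; rewrite nth_iota ?add0n /P ?hv //; lia.
move=> hle; apply: (nball_mono hle).
have := nth_find 0 hasP_; rewrite nth_iota ?add0n; [exact | exact: find_lt].
Qed.

Lemma dist_refl u : d u u = 0.
Proof. by apply/eqP; rewrite -leqn0 -mem_nball_dist /= inE. Qed.

Lemma dist_eq0 u v : d u v = 0 -> u = v.
Proof. by move=> h; have := leqnn (d u v); rewrite -mem_nball_dist h /= inE => /eqP. Qed.

Lemma dist_sym u v : d u v = d v u.
Proof.
have dist_sym_le a b : d a b <= d b a.
  by rewrite -mem_nball_dist; apply: nball_sym; rewrite mem_nball_dist.
by apply/eqP; rewrite eqn_leq !dist_sym_le.
Qed.

Lemma dist_triangle u v w : d u w <= d u v + d v w.
Proof.
by rewrite -mem_nball_dist; apply: (nball_cat (v := v)); rewrite mem_nball_dist.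
Qed.

Lemma dist_edge u v : e u v -> d u v = 1.
Proof.
move=> huv; apply/eqP; rewrite eqn_leq -mem_nball_dist nball1 //= lt0n.
by apply/eqP => /dist_eq0 eq_uv; rewrite eq_uv eirr in huv.
Qed.

Lemma dist_last_edge n u v : d u v = n.+1 -> exists2 x, d u x = n & e x v.
Proof.
move=> duv; have := leqnn (d u v); rewrite -mem_nball_dist duv nballS.
case/orP => [|/existsP [x /andP [hx exv]]]; first by rewrite mem_nball_dist duv ltnn.
exists x => //; have := dist_triangle u x v.
by rewrite mem_nball_dist in hx; rewrite (dist_edge exv) duv; lia.
Qed.

Lemma dist1_edge u v : d u v = 1 -> e u v.
Proof. by case/dist_last_edge=> x /dist_eq0 ->. Qed.

Lemma geodesic_point u v j : j <= d u v -> exists2 w, d u w = j & d w v = d u v - j.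
Proof.
have [n duv] : exists n, d u v = n by eexists.
rewrite duv; elim: n v duv => [|n IH] v duv hj.
  by exists u; rewrite ?dist_refl; lia.
have [->|hjn] := eqVneq j n.+1; first by exists v; rewrite ?dist_refl; lia.
have [x dux exv] := dist_last_edge duv.
have [w duw dwx] := IH x dux (ltac:(lia) : j <= n).
exists w => //; have := dist_triangle w x v; have := dist_triangle u w v.
by rewrite (dist_edge exv); lia.
Qed.

Lemma dist_le_ecc u v : d u v <= ecc e v.
Proof. exact: (leq_bigmax (F := fun u => d u v)). Qed.

Lemma ecc_attained v : exists u, d u v = ecc e v.
Proof. by exists [arg max_(u > v) d u v]; rewrite /ecc (bigmax_eq_arg v). Qed.

Section AlphaMetric.
Variable i : nat.
Hypothesis halpha : alpha_metric e i.

Lemma alpha_step a v w b :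
  e v w -> (d w b).+1 = d v b -> d a b + i < d a v + d v b -> d a w <= d a v.
Proof.
move=> evw dwb hlt; rewrite leqNgt; apply/negP => hvw.
have := dist_triangle a v w; rewrite (dist_edge evw) => hle.
have v_in : in_interval e a w v by rewrite /in_interval (dist_edge evw); apply/eqP; lia.
have w_in : in_interval e v b w by rewrite /in_interval (dist_edge evw); apply/eqP; lia.
by have := halpha v_in w_in evw; lia.
Qed.

Lemma alpha_dist_ge_beyond s z y w v :
  s <= d z w -> d z y + i < s + d w y -> d v y = d v w + d w y -> s <= d z v.
Proof.
move=> hs hlt; have [n dwv] : exists n, d w v = n by eexists.
elim: n v dwv => [|n IH] v dwv dvy; first by rewrite -(dist_eq0 dwv).
have [v' dwv' ev'v] := dist_last_edge dwv.
have evv' : e v v' by rewrite esym.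
rewrite (dist_sym v w) dwv in dvy.
have dv'y : d v' y = d v' w + d w y.
  have := dist_triangle v v' y; have := dist_triangle v' w y.
  by rewrite (dist_sym v' w) dwv' (dist_edge evv'); lia.
have := dist_triangle z v v'; rewrite (dist_edge evv') => hzv'.
apply: leq_trans (IH v' dwv' dv'y) (alpha_step (b := y) evv' _ _).
- by rewrite dv'y (dist_sym v' w) dwv' dvy.
- by have := IH v' dwv' dv'y; lia.
Qed.

Section LongGeodesic.
Variables (x y c p : T) (r : nat).
Hypothesis hxc : d x c = i.+1.
Hypothesis hcp : d c p = i.+1.
Hypothesis hgeo : d x c + d c p + d p y = d x y.
Hypothesis hlong : i < d p y.
Hypothesis hxr : forall z, d z x <= r.
Hypothesis hyr : forall z, d z y <= r.

Lemma dist_xp : d x p = i.+1 + i.+1.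
Proof. by have := dist_triangle x c p; have := dist_triangle x p y; lia. Qed.

Lemma dist_cy : d c y = d c p + d p y.
Proof. by have := dist_triangle c p y; have := dist_triangle x c y; lia. Qed.

Lemma dist_p_radius z : d c z = r -> d z p = r.
Proof.
move=> dcz; have zx := hxr z; have zy := hyr z; rewrite dist_sym in dcz.
apply/eqP; rewrite eqn_leq; apply/andP; split.
  rewrite leqNgt; apply/negP => hlt.
  have := @alpha_dist_ge_beyond r.+1 z y p c hlt (ltac:(lia)) dist_cy; lia.
apply: (@alpha_dist_ge_beyond r z x c p).
- by rewrite dcz.
- by rewrite (dist_sym c x) hxc; lia.
- by rewrite (dist_sym p x) (dist_sym p c) dist_xp hcp (dist_sym c x) hxc.
Qed.

Lemma dist_center_lt_radius z0 : d z0 c < r.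
Proof.
rewrite ltnNge; apply/negP => far.
have [z dcz _] : exists2 z, d c z = r & d z z0 = d c z0 - r.
  by apply: geodesic_point; rewrite dist_sym.
have r_pos : 0 < r by have := hxr c; rewrite dist_sym; lia.
have dzp := dist_p_radius dcz.
have [q dcq dqz] := @geodesic_point c z 1 (ltac:(lia)).
have ecq := dist1_edge dcq.
have dpz : d p z = r by rewrite dist_sym.
have dxz : d x z <= r by rewrite dist_sym.
have zy := hyr z.
have dxq : d x q <= d x c by apply: (alpha_step (b := z) ecq); lia.
have dpq : d p q <= d p c by apply: (alpha_step (b := z) ecq); rewrite ?(dist_sym p c); lia.
have dqy : d q y = d q p + d p y.
  have := dist_triangle q p y; have := dist_triangle x q y.
  by rewrite (dist_sym p q) (dist_sym p c) in dpq; have := dist_xp; lia.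
have := @alpha_dist_ge_beyond r z y p q (ltac:(lia)) (ltac:(lia)) dqy.
by rewrite (dist_sym z q) dqz; lia.
Qed.

End LongGeodesic.
End AlphaMetric.
End GraphMetric.

Theorem theorem1 (T : finType) (e : rel T) (i : nat) :
  simple_graph e -> connected_graph e -> alpha_metric e i ->
  forall x y : T, is_central e x -> is_central e y -> dist e x y <= 3 * i + 2.
Proof.
move=> [esym eirr] econ halpha x y x_central y_central.
rewrite leqNgt; apply/negP => long.
have [c dxc dcy] := geodesic_point eirr econ (ltac:(lia) : i.+1 <= dist e x y).
have [p dcp dpy] := geodesic_point eirr econ (ltac:(lia) : i.+1 <= dist e c y).
have [z dzc] := ecc_attained e c.
have : dist e z c < ecc e x.
  apply: (dist_center_lt_radius esym eirr econ halpha (y := y) dxc dcp) => [||z'|z'].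
  - lia.
  - lia.
  - exact: dist_le_ecc.
  - exact: leq_trans (dist_le_ecc e z' y) (y_central x).
by rewrite dzc ltnNge x_central.
Qed.
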